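(* Let $i,j$ be integers with $0\leq j\leq i$. Then, as an identity of polynomials in $q$ (equivalently, of formal power series in $q$), $$\sum_{k=0}^{j}(q^{i-k+1};q)_k\,{j\brack k}\, q^{(i-k)(j-k)}=\sum_{\lambda\in O(i,j)}(-1)^{ol(\lambda)}\,q^{|\lambda|+ol(\lambda)\,(i-\ell(\lambda)+1)}\,q^{(i-\ell(\lambda))(j-\ell(\lambda))},$$ where $O(i,j)$ is the set of overpartitions defined in the context.
   Context: For $k\geq 1$, $(a;q)_k=(1-a)(1-aq)\cdots(1-aq^{k-1})$ and $(a;q)_0=1$; ${j\brack k}=\frac{(q;q)_j}{(q;q)_k(q;q)_{j-k}}$ is the Gaussian (q-binomial) coefficient. An overpartition with $k$ nonnegative parts is a sequence $\lambda=(\lambda_1,\dots,\lambda_k)$ of integers with $\lambda_1\geq\lambda_2\geq\cdots\geq\lambda_k\geq 0$ in which the first occurrence (leftmost position) of each value may or may not be marked as ''overlined'' (the value $0$ may also be overlined); thus overlined parts have distinct values. Its size is $|\lambda|=\sum_r\lambda_r$, its length $\ell(\lambda)=k$ counts all parts including zeros, and $ol(\lambda)$ is the number of overlined parts. For $0\leq k\leq j$, $O(i,j,k)$ denotes the set of overpartitions $\lambda$ with exactly $k$ nonnegative parts such that (1) every part is at most $j-1$; and (2) when $k\geq 2$, for each $1\leq s\leq k-1$ and each position $r$ with $\lambda_r=j-s$, at least $k-s$ of the parts $\lambda_{r+1},\dots,\lambda_k$ are overlined. (The paper also views each overline of an element of $O(i,j,k)$ as carrying weight $i-k+1$; this weight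 appears as the factor $i-\ell(\lambda)+1$ in the exponent.) $O(i,0,0)$ consists only of the empty partition, and $O(i,j)=\biguplus_{k=0}^{j}O(i,j,k)$. *)

(* Polynomials in q are elements of {poly rat}, q = 'X. *)
From HB Require Import structures.
From mathcomp Require Import all_boot all_order all_algebra.
Set Implicit Arguments. Unset Strict Implicit. Unset Printing Implicit Defensive.
Import Order.TTheory GRing.Theory Num.Theory.
Local Open Scope ring_scope.

Definition qpoch (a : {poly rat}) (k : nat) : {poly rat} :=
  \prod_(m < k) (1 - a * 'X^m).

(* Gaussian coefficient [j brack k] = (q;q)_j / ((q;q)_k (q;q)_{j-k}); the
   division is exact in {poly rat} (used only for k <= j). *)
Definition gauss (j k : nat) : {poly rat} :=
  qpoch 'X j %/ (qpoch 'X k * qpoch 'X (j - k)).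

(* An overpartition with k parts is a sequence of (value, overlined?) pairs. *)
Definition opval (x : nat * bool) : nat := x.1.
Definition opover (x : nat * bool) : bool := x.2.

Definition op_nonincr (s : seq (nat * bool)) : bool :=
  sorted (fun x y => opval y <= opval x)%N s.

(* only the first (leftmost) occurrence of a value may be overlined *)
Definition op_first (s : seq (nat * bool)) : bool :=
  all (fun r => opover (nth (0%N, false) s r) ==>
        all (fun r' => opval (nth (0%N, false) s r') != opval (nth (0%N, false) s r))
            (iota 0 r))
      (iota 0 (size s)).

Definition is_overpartition (s : seq (nat * bool)) : bool :=
  op_nonincr s && op_first s.

Definition ol (s : seq (nat * bool)) : nat := count opover s.
Definition opsize (s : seq (nat * bool)) : nat := sumn (map opval s).

(* Condition (2) of O(i,j,k) (positions 0-indexed here: position r stands for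
   lambda_{r+1}; parts after it are drop r.+1 s).  For each 1 <= s' <= k-1 and
   each position r with lambda_r = j - s', at least k - s' of the later parts
   are overlined.  (For k < 2 the range of s' is empty.) *)
Definition op_cond2 (j : nat) (s : seq (nat * bool)) : bool :=
  let k := size s in
  all (fun sp =>
     all (fun r => (opval (nth (0%N, false) s r) + sp == j)%N ==>
                   (k - sp <= ol (drop r.+1 s))%N)
         (iota 0 k))
   (iota 1 k.-1).

(* forgetting the bound on values: parts are elements of 'I_j, i.e. <= j-1,
   which is condition (1). *)
Definition op_of_tuple (j k : nat) (t : k.-tuple ('I_j * bool)) : seq (nat * bool) :=
  [seq (nat_of_ord x.1, x.2) | x <- t].

Definition inO (j k : nat) (t : k.-tuple ('I_j * bool)) : bool :=
  is_overpartition (op_of_tuple t) && op_cond2 j (op_of_tuple t).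

(* Fix k and read an overpartition of O(i,j,k) from its smallest part upwards,
   as a sequence of pairs (value, overlined).  Then overlined parts are
   strictly below all later parts, and condition (2) says that each part is at
   most j - k plus the number of overlined parts before it.  Removing the
   smallest part v, with overline bit b, and lowering the others by v + b
   leaves a sequence of the same kind of length k - 1 with bound j - k - v.
   Along this recursion the weights (-1)^ol q^(|lambda| + ol a), a = i - k + 1,
   sum to (q^a;q)_k times the Gaussian polynomial [j brack k], which obeys the
   same recursion in the smallest part. *)

From HB Require Import structures.
From mathcomp Require Import all_boot all_order all_algebra ring zify.
Set Implicit Arguments. Unset Strict Implicit. Unset Printing Implicit Defensive.
Import Order.TTheory GRing.Theory Num.Theory.

Section GaussianPolynomial.
Local Open Scope ring_scope.

(* [qbinom k d] is the Gaussian polynomial [d+k brack k], the generating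
   function of partitions into at most k parts bounded by d, recursing on the
   smallest part v. *)
Fixpoint qbinom (k d : nat) : {poly rat} :=
  if k is k'.+1 then \sum_(v < d.+1) 'X^(k * v) * qbinom k' (d - v) else 1.

Lemma qbinomn0 k : qbinom k 0 = 1.
Proof. by elim: k => //= k IHk; rewrite big_ord1 subn0 IHk muln0 mulr1. Qed.

Lemma qbinomSS k d : qbinom k.+1 d.+1 = qbinom k d.+1 + 'X^(k.+1) * qbinom k.+1 d.
Proof.
rewrite /= big_ord_recl muln0 mul1r subn0 mulr_sumr; congr (_ + _).
by apply: eq_bigr => v _; rewrite subSS mulnS exprD mulrA.
Qed.

Lemma qpoch0 a : qpoch a 0 = 1.
Proof. exact: big_ord0. Qed.

Lemma qpochS a k : qpoch a k.+1 = qpoch a k * (1 - a * 'X^k).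
Proof. exact: big_ord_recr. Qed.

Lemma qpochXS k : qpoch 'X k.+1 = qpoch 'X k * (1 - 'X^(k.+1)).
Proof. by rewrite qpochS exprS. Qed.

Lemma qpochX_add k d : qpoch 'X (d + k) = qpoch 'X k * qpoch 'X d * qbinom k d.
Proof.
elim: k d => [|k IHk] d; first by rewrite addn0 qpoch0 mul1r mulr1.
elim: d => [|d IHd]; first by rewrite add0n qpoch0 qbinomn0 !mulr1.
have {IHk} IHk := IHk d.+1; rewrite addSn in IHk; rewrite addnS in IHd.
rewrite addSn addnS qbinomSS mulrDr.
have -> : qpoch 'X k.+1 * qpoch 'X d.+1 * qbinom k d.+1
          = (1 - 'X^(k.+1)) * qpoch 'X (d + k).+1 by rewrite IHk !qpochXS; ring.
have -> : qpoch 'X k.+1 * qpoch 'X d.+1 * ('X^(k.+1) * qbinom k.+1 d)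
          = 'X^(k.+1) * (1 - 'X^(d.+1)) * qpoch 'X (d + k).+1
  by rewrite IHd !qpochXS; ring.
rewrite qpochXS (_ : (d + k).+2 = k.+1 + d.+1)%N ?exprD; [ring | lia].
Qed.

Lemma qpochX_neq0 n : qpoch 'X n != 0.
Proof.
apply/prodf_neq0 => m _; apply/eqP => /(congr1 (coefp 0)) /eqP.
by rewrite /= coefB coef1 -exprS coefXn coef0 /= subr0 oner_eq0.
Qed.

Lemma gauss_qbinom k d : gauss (d + k) k = qbinom k d.
Proof. by rewrite /gauss addnK qpochX_add mulrC mulpK // mulf_neq0 ?qpochX_neq0. Qed.

End GaussianPolynomial.

Definition part_le (x y : nat * bool) : bool := x.1 + x.2 <= y.1.

Fixpoint ol_bounded (e : nat) (r : seq (nat * bool)) : bool :=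
  if r is x :: r' then (x.1 <= e) && ol_bounded (e + x.2) r' else true.

Definition shift_part (c : nat) (y : nat * bool) : nat * bool := (y.1 + c, y.2).

Definition parts_le (d : nat) : seq (nat * bool) :=
  [seq (v, b) | v <- iota 0 d.+1, b <- [:: false; true]].

Fixpoint op_enum (k d : nat) : seq (seq (nat * bool)) :=
  if k is k'.+1 then
    [seq x :: map (shift_part (x.1 + x.2)) r
       | x : nat * bool <- parts_le d, r <- op_enum k' (d - x.1)]
  else [:: [::]].

Lemma mem_parts_le d x : (x \in parts_le d) = (x.1 <= d).
Proof.
case: x => v b /=; apply/allpairsP/idP => [[[v' b'] [+ _ [-> _]]]|le_vd].
  by rewrite mem_iota.
by exists (v, b); rewrite mem_iota ltnS le_vd; case: b.
Qed.

Lemma uniq_parts_le d : uniq (parts_le d).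
Proof. by apply: allpairs_uniq => [|//|[? ?] [? ?] _ _ [-> ->] //]; apply: iota_uniq. Qed.

Lemma pairwise_shift c r :
  pairwise part_le (map (shift_part c) r) = pairwise part_le r.
Proof.
by rewrite pairwise_map; apply: eq_pairwise => x y; rewrite /part_le /= addnAC leq_add2r.
Qed.

Lemma ol_bounded_shift e c r :
  ol_bounded (e + c) (map (shift_part c) r) = ol_bounded e r.
Proof. by elim: r e => //= x r IHr e; rewrite leq_add2r addnAC IHr. Qed.

Lemma ol_bounded_lt e r : ol_bounded e r -> all (fun x => x.1 < e + size r) r.
Proof.
elim: r e => //= x r IHr e /andP [le_xe /IHr /allP bounded_r].
apply/andP; split; first lia.
by apply/allP => y /bounded_r; case: (x.2); lia.
Qed.

Lemma mem_op_enum k d r :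
  (r \in op_enum k d) = [&& size r == k, pairwise part_le r & ol_bounded d r].
Proof.
elim: k d r => [|k IHk] d r; first by case: r.
apply/allpairsPdep/idP => [[x [r' [+ + ->]]]|].
  rewrite mem_parts_le IHk => le_xd /and3P [/eqP <- pw_r' bd_r'] /=.
  rewrite size_map eqxx pairwise_shift pw_r' le_xd.
  have -> : d + x.2 = d - x.1 + (x.1 + x.2) by lia.
  rewrite ol_bounded_shift bd_r' !andbT.
  by apply/allP => _ /mapP [y _ ->]; rewrite /part_le leq_addl.
case: r => [|x r] //= /and3P [size_r /andP [/allP above_x pw_r] /andP [le_xd bd_r]].
rewrite eqSS in size_r.
pose c := x.1 + x.2; pose r' := [seq (y.1 - c, y.2) | y <- r].
have shift_r' : map (shift_part c) r' = r.
  rewrite -map_comp -[RHS]map_id; apply/eq_in_map => -[v b] /above_x.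
  by rewrite /part_le /= => le_cv; rewrite /shift_part /= subnK.
exists x, r'; split; rewrite ?mem_parts_le ?shift_r' //.
rewrite IHk size_map size_r -(pairwise_shift c) shift_r' pw_r /=.
by rewrite -(ol_bounded_shift _ c) shift_r' /c addnA subnK.
Qed.

Lemma uniq_op_enum k d : uniq (op_enum k d).
Proof.
elim: k d => [//|k IHk] d.
apply: allpairs_uniq_dep => [||[x r] [x' r'] _ _ /= [-> /inj_map eq_r]].
- exact: uniq_parts_le.
- by move=> x _; apply: IHk.
by rewrite eq_r // => -[v b] [v' b'] [/addIn -> ->].
Qed.

Lemma op_enum_size k d r : r \in op_enum k d -> size r = k.
Proof. by rewrite mem_op_enum => /and3P [/eqP]. Qed.

Lemma ol_shift c r : ol (map (shift_part c) r) = ol r.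
Proof. by rewrite /ol count_map. Qed.

Lemma opsize_shift c r : opsize (map (shift_part c) r) = opsize r + size r * c.
Proof. by elim: r => //= y r; rewrite /opsize /opval /= => ->; lia. Qed.

Section WeightSum.
Local Open Scope ring_scope.

Definition opweight (a : nat) (s : seq (nat * bool)) : {poly rat} :=
  (-1) ^+ ol s * 'X^(opsize s + ol s * a).

Lemma opweight_cons_shift a x c r :
  opweight a (x :: map (shift_part c) r)
  = (-1) ^+ x.2 * 'X^(x.1 + x.2 * a + size r * c) * opweight a r.
Proof.
rewrite /opweight [ol _]/= ol_shift /opsize /= -/(opsize _) opsize_shift.
have -> : (x.1 + (opsize r + size r * c) + (x.2 + ol r) * a
           = x.1 + x.2 * a + size r * c + (opsize r + ol r * a))%N by lia.
by rewrite exprD !exprD; ring.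
Qed.

(* Summing over the overline bit b of the smallest part v gives the factor
   q^((k+1) v) (1 - q^(a + k)), which splits as in qbinom and qpochS. *)
Lemma sum_opweight_op_enum a k d :
  \sum_(r <- op_enum k d) opweight a r = qpoch ('X^a) k * qbinom k d.
Proof.
elim: k d => [|k IHk] d.
  by rewrite big_seq1 /opweight qpoch0 !mul0n !expr0 mulr1.
rewrite big_allpairs_dep /=.
transitivity (\sum_(x <- parts_le d) (-1) ^+ x.2 * 'X^(x.1 + x.2 * a + k * (x.1 + x.2))
                                     * (qpoch ('X^a) k * qbinom k (d - x.1))).
  apply: eq_bigr => x _; rewrite -IHk mulr_sumr !big_seq.
  by apply: eq_bigr => r /op_enum_size <-; apply: opweight_cons_shift.
rewrite big_allpairs -[iota 0 d.+1]/(index_iota 0 d.+1) big_mkord qpochS mulr_sumr.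
apply: eq_bigr => v _; rewrite !big_cons big_nil /=.
have -> : (v + 0 * a + k * (v + 0) = k.+1 * v)%N by lia.
have -> : (v + 1 * a + k * (v + 1) = k.+1 * v + (a + k))%N by lia.
by rewrite !exprD; ring.
Qed.

End WeightSum.

Lemma pairwise_rev (T : Type) (r : rel T) s :
  pairwise r (rev s) = pairwise (fun x y => r y x) s.
Proof.
elim: s => //= x s IHs.
by rewrite rev_cons pairwise_rcons IHs all_rev andbC.
Qed.

Lemma all_iota_nth (T : Type) (x0 : T) (p : pred T) s :
  all p s = all (fun r => p (nth x0 s r)) (iota 0 (size s)).
Proof. by rewrite -{1}(mkseq_nth x0 s) all_map. Qed.

Lemma iota1 n : iota 1 n = map succn (iota 0 n).
Proof. exact: (iotaDl 1 0 n). Qed.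

Lemma op_first_cons y s :
  op_first (y :: s) = all (fun z => z.2 ==> (y.1 != z.1)) s && op_first s.
Proof.
rewrite /op_first /= implybT iota1 all_map (@all_iota_nth _ (0, false) _ s).
rewrite -all_predI; apply: eq_all => r /=.
by rewrite iota1 all_map /opover /opval; case: (nth _ s r).2.
Qed.

Lemma op_first_pairwise s :
  op_first s = pairwise (fun x y => y.2 ==> (x.1 != y.1)) s.
Proof. by elim: s => //= y s IHs; rewrite op_first_cons IHs. Qed.

Lemma is_overpartition_rev s : is_overpartition s = pairwise part_le (rev s).
Proof.
have nonincr_trans : transitive (fun x y : nat * bool => opval y <= opval x).
  by move=> y x z /= le_yx le_zy; apply: leq_trans le_zy le_yx.
rewrite /is_overpartition /op_nonincr sorted_pairwise // op_first_pairwise.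
rewrite pairwise_rev -pairwise_relI; apply: eq_pairwise => x y /=.
rewrite /part_le /opval; case: y.2; rewrite /= ?addn0 ?andbT //.
by rewrite addn1 ltn_neqAle eq_sym andbC.
Qed.

Lemma ol_bounded_rcons e r y :
  ol_bounded e (rcons r y) = ol_bounded e r && (y.1 <= e + ol r).
Proof.
by elim: r e => [|x r IHr] e /=; rewrite ?addn0 ?andbT // IHr /ol /= addnA andbA.
Qed.

(* Condition (2) at position r, taken with s' = j - lambda_r, is the bound
   lambda_r <= (j - k) + #(overlined later parts); it is vacuous when
   lambda_r <= j - k. *)
Lemma op_cond2_drop j s : size s <= j -> all (fun x => x.1 < j) s ->
  op_cond2 j s =
  all (fun r => opval (nth (0, false) s r) <= j - size s + ol (drop r.+1 s)) (iota 0 (size s)).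
Proof.
move=> le_sj /allP lt_j; apply/allP/allP => [cond2 r r_s | bounded sp].
  have lt_r : r < size s by rewrite mem_iota in r_s.
  have := lt_j _ (mem_nth (0, false) lt_r); rewrite /opval.
  set v := (nth (0, false) s r).1.
  case: (leqP v (j - size s)) => [le_v _ | lt_v lt_vj].
    exact: leq_trans le_v (leq_addr _ _).
  have sp_s : j - v \in iota 1 (size s).-1 by rewrite mem_iota -subn1; lia.
  move/allP/(_ r r_s): (cond2 _ sp_s); rewrite -/v.
  have -> : v + (j - v) == j by apply/eqP; lia.
  by move=> /= ?; lia.
rewrite mem_iota -subn1 => sp_s; apply/allP => r r_s; apply/implyP => /eqP v_eq.
by have := bounded r r_s; lia.
Qed.

Lemma all_drop_ol_bounded e s :
  all (fun r => opval (nth (0, false) s r) <= e + ol (drop r.+1 s)) (iota 0 (size s))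
  = ol_bounded e (rev s).
Proof.
elim: s => //= y s IHs.
by rewrite iota1 all_map drop0 IHs rev_cons ol_bounded_rcons /ol count_rev andbC.
Qed.

Lemma op_cond2_rev j s : size s <= j -> all (fun x => x.1 < j) s ->
  op_cond2 j s = ol_bounded (j - size s) (rev s).
Proof. by move=> le_sj lt_j; rewrite op_cond2_drop // all_drop_ol_bounded. Qed.

Lemma op_of_tuple_inj j k : injective (@op_of_tuple j k).
Proof.
move=> t1 t2 /inj_map eq_t; apply/val_inj/eq_t.
by move=> [v b] [v' b'] [/val_inj -> ->].
Qed.

Lemma op_of_tuple_lt j k (t : k.-tuple ('I_j * bool)) :
  all (fun x => x.1 < j) (op_of_tuple t).
Proof. by rewrite all_map; apply/allP => -[v b] _ /=. Qed.

Lemma op_of_tupleP j n s : size s = n -> all (fun x => x.1 < j) s ->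
  exists t : n.-tuple ('I_j * bool), op_of_tuple t = s.
Proof.
elim: s n => [|[v b] s IHs] [|n] //=; first by exists [tuple].
case=> /IHs IHn /andP [lt_vj /IHn [t eq_t]].
by exists [tuple of (Ordinal lt_vj, b) :: t]; rewrite /op_of_tuple /= -eq_t.
Qed.

Lemma inO_op_enum j k (t : k.-tuple ('I_j * bool)) : k <= j ->
  inO t = (rev (op_of_tuple t) \in op_enum k (j - k)).
Proof.
have size_t : size (op_of_tuple t) = k by rewrite size_map size_tuple.
move=> le_kj; rewrite mem_op_enum size_rev size_t eqxx /inO is_overpartition_rev.
by rewrite op_cond2_rev ?size_t ?op_of_tuple_lt.
Qed.

Local Open Scope ring_scope.

Lemma opweight_rev a s : opweight a (rev s) = opweight a s.
Proof. by rewrite /opweight /ol count_rev /opsize map_rev sumn_rev. Qed.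

Lemma sum_inO_op_enum j k a : (k <= j)%N ->
  \sum_(t : k.-tuple ('I_j * bool) | inO t) opweight a (op_of_tuple t)
  = \sum_(r <- op_enum k (j - k)) opweight a r.
Proof.
move=> le_kj; rewrite -big_filter.
under eq_bigr do rewrite -opweight_rev.
rewrite -(big_map (fun t => rev (op_of_tuple t)) xpredT (opweight a)).
apply/perm_big/uniq_perm => [||r].
- rewrite map_inj_uniq ?filter_uniq ?index_enum_uniq //.
  by move=> t1 t2 /(can_inj revK) /op_of_tuple_inj.
- exact: uniq_op_enum.
apply/mapP/idP => [[t] | r_enum].
  by rewrite mem_filter inO_op_enum // => /andP [? _] ->.
have lt_j : all (fun x => x.1 < j)%N (rev r).
  move: r_enum; rewrite mem_op_enum all_rev => /and3P [/eqP size_r _ /ol_bounded_lt].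
  by rewrite size_r subnK.
have [t eq_t] := op_of_tupleP (etrans (size_rev r) (op_enum_size r_enum)) lt_j.
exists t; last by rewrite eq_t revK.
by rewrite mem_filter mem_index_enum andbT inO_op_enum // eq_t revK.
Qed.

Theorem theorem2p2 (i j : nat) (hji : (j <= i)%N) :
  \sum_(k < j.+1)
     qpoch ('X^(i - k + 1)) k * gauss j k * 'X^((i - k) * (j - k))
  =
  \sum_(k < j.+1) \sum_(t : k.-tuple ('I_j * bool) | inO t)
     (-1) ^+ ol (op_of_tuple t)
       * 'X^(opsize (op_of_tuple t) + ol (op_of_tuple t) * (i - k + 1))
       * 'X^((i - k) * (j - k)) :> {poly rat}.
Proof.
apply: eq_bigr => k _; have le_kj : (k <= j)%N by rewrite -ltnS.
rewrite -mulr_suml; congr (_ * _).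
have -> : gauss j k = qbinom k (j - k) by rewrite -gauss_qbinom subnK.
by rewrite -sum_opweight_op_enum -sum_inO_op_enum.
Qed.
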